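(* The refinement system $p:\mathbf{Subset}\to\mathbf{Rel}$ is symmetric monoidal closed, with tensor product and implication of $\mathbf{Subset}$ defined as $(A,R)\otimes(B,S)=(A\times B,R\otimes S)$ and $(A,R)\multimap(B,S)=(A\times B,R\multimap S)$, where $R\otimes S=\{(a,b)\in A\times B\mid Ra\wedge Sb\}$ and $R\multimap S=\{(a,b)\in A\times B\mid Ra\Rightarrow Sb\}$.
   Context: $\mathbf{Rel}$ is the compact closed category $(\mathbf{Rel},\times,1)$ of sets and binary relations (a morphism from $A$ to $B$ is a relation $M\subseteq A\times B$). $\mathbf{Subset}$ has objects $(A,R)$ with $R\subseteq A$ and morphisms $M:(A,R)\to(B,S)$ the relations $M\subseteq A\times B$ with $(M(a,b)\wedge Ra)\Rightarrow Sb$ for all $a,b$; $p$ forgets the subset. A (symmetric) monoidal closed refinement system is a functor $p:\mathscr{E}\to\mathscr{B}$ between (symmetric) monoidal closed categories that preserves the (symmetric) monoidal closed structure up to coherent isomorphism. *)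

(* Equality of morphisms is Leibniz equality (relations are Prop-valued
   functions; their equality is extensional by funext/propext). *)

Record Cat := {
  Ob : Type;
  Hom : Ob -> Ob -> Type;
  idm : forall A, Hom A A;
  comp : forall A B C, Hom B C -> Hom A B -> Hom A C }.
Arguments Hom {c} _ _.
Arguments idm {c} _.
Arguments comp {c A B C} _ _.

Definition IsCat (C : Cat) : Prop :=
  (forall (A B : Ob C) (f : Hom A B), comp (idm B) f = f) /\
  (forall (A B : Ob C) (f : Hom A B), comp f (idm A) = f) /\
  (forall (A B C' D : Ob C) (f : Hom A B) (g : Hom B C') (h : Hom C' D),
      comp h (comp g f) = comp (comp h g) f).

Definition IsIso {C : Cat} {A B : Ob C} (f : Hom A B) : Prop :=
  exists g : Hom B A, comp g f = idm A /\ comp f g = idm B.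

Record Functor (C D : Cat) := {
  fob : Ob C -> Ob D;
  fmap : forall A B, @Hom C A B -> @Hom D (fob A) (fob B) }.
Arguments fob {C D} _ _.
Arguments fmap {C D} _ {A B} _.

Definition IsFunctor {C D : Cat} (F : Functor C D) : Prop :=
  (forall A : Ob C, fmap F (idm A) = idm (fob F A)) /\
  (forall (A B C' : Ob C) (f : Hom A B) (g : Hom B C'),
      fmap F (comp g f) = comp (fmap F g) (fmap F f)).

Record SMCData (C : Cat) := {
  tens : Ob C -> Ob C -> Ob C;
  tensm : forall A A' B B', Hom A B -> Hom A' B' -> Hom (tens A A') (tens B B');
  tunit : Ob C;
  assoc : forall A B D, Hom (tens (tens A B) D) (tens A (tens B D));
  lunitor : forall A, Hom (tens tunit A) A;
  runitor : forall A, Hom (tens A tunit) A;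
  braid : forall A B, Hom (tens A B) (tens B A);
  ihom : Ob C -> Ob C -> Ob C;
  ev : forall A B, Hom (tens (ihom A B) A) B;
  cur : forall X A B, Hom (tens X A) B -> Hom X (ihom A B) }.
Arguments tens {C} _ _ _.
Arguments tensm {C} _ {A A' B B'} _ _.
Arguments tunit {C} _.
Arguments assoc {C} _ _ _ _.
Arguments lunitor {C} _ _.
Arguments runitor {C} _ _.
Arguments braid {C} _ _ _.
Arguments ihom {C} _ _ _.
Arguments ev {C} _ _ _.
Arguments cur {C} _ {X A B} _.

Definition IsSMC {C : Cat} (M : SMCData C) : Prop :=
  (forall A A' : Ob C, tensm M (idm A) (idm A') = idm (tens M A A')) /\
  (forall (A A' B B' D D' : Ob C) (f : Hom A B) (g : Hom B D)
          (f' : Hom A' B') (g' : Hom B' D'),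
      tensm M (comp g f) (comp g' f') = comp (tensm M g g') (tensm M f f')) /\
  (forall A B D, IsIso (assoc M A B D)) /\
  (forall A, IsIso (lunitor M A)) /\
  (forall A, IsIso (runitor M A)) /\
  (forall (A A' B B' D D' : Ob C) (f : Hom A A') (g : Hom B B') (h : Hom D D'),
      comp (assoc M A' B' D') (tensm M (tensm M f g) h)
      = comp (tensm M f (tensm M g h)) (assoc M A B D)) /\
  (forall (A A' : Ob C) (f : Hom A A'),
      comp (lunitor M A') (tensm M (idm (tunit M)) f) = comp f (lunitor M A)) /\
  (forall (A A' : Ob C) (f : Hom A A'),
      comp (runitor M A') (tensm M f (idm (tunit M))) = comp f (runitor M A)) /\
  (forall (A A' B B' : Ob C) (f : Hom A A') (g : Hom B B'),
      comp (braid M A' B') (tensm M f g) = comp (tensm M g f) (braid M A B)) /\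
  (forall A B D E : Ob C,
      comp (assoc M A B (tens M D E)) (assoc M (tens M A B) D E)
      = comp (tensm M (idm A) (assoc M B D E))
          (comp (assoc M A (tens M B D) E) (tensm M (assoc M A B D) (idm E)))) /\
  (forall A B : Ob C,
      comp (tensm M (idm A) (lunitor M B)) (assoc M A (tunit M) B)
      = tensm M (runitor M A) (idm B)) /\
  (forall A B D : Ob C,
      comp (assoc M B D A) (comp (braid M A (tens M B D)) (assoc M A B D))
      = comp (tensm M (idm B) (braid M A D))
          (comp (assoc M B A D) (tensm M (braid M A B) (idm D)))) /\
  (forall A B : Ob C, comp (braid M B A) (braid M A B) = idm (tens M A B)) /\
  (* closedness: (- (x) A) -| (A -o -) with counit ev *)
  (forall (X A B : Ob C) (f : Hom (tens M X A) B),
      comp (ev M A B) (tensm M (cur M f) (idm A)) = f) /\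
  (forall (X A B : Ob C) (f : Hom (tens M X A) B) (g : Hom X (ihom M A B)),
      comp (ev M A B) (tensm M g (idm A)) = f -> g = cur M f).

Record SMFData {C D : Cat} (MC : SMCData C) (MD : SMCData D) (P : Functor C D) := {
  phi2 : forall X Y : Ob C, Hom (tens MD (fob P X) (fob P Y)) (fob P (tens MC X Y));
  phi0 : Hom (tunit MD) (fob P (tunit MC)) }.
Arguments phi2 {C D MC MD P} _ _ _.
Arguments phi0 {C D MC MD P} _.

(* P preserves the symmetric monoidal closed structure up to coherent
   isomorphism: strong symmetric monoidal with invertible comparison maps, and
   the canonical comparison P(X -o Y) -> P X -o P Y is invertible. *)
Definition IsStrongSMClosed {C D : Cat} {MC : SMCData C} {MD : SMCData D}
    {P : Functor C D} (F : SMFData MC MD P) : Prop :=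
  (forall X Y, IsIso (phi2 F X Y)) /\
  IsIso (phi0 F) /\
  (forall (X X' Y Y' : Ob C) (f : Hom X X') (g : Hom Y Y'),
      comp (phi2 F X' Y') (tensm MD (fmap P f) (fmap P g))
      = comp (fmap P (tensm MC f g)) (phi2 F X Y)) /\
  (forall X Y Z : Ob C,
      comp (fmap P (assoc MC X Y Z))
        (comp (phi2 F (tens MC X Y) Z) (tensm MD (phi2 F X Y) (idm (fob P Z))))
      = comp (phi2 F X (tens MC Y Z))
          (comp (tensm MD (idm (fob P X)) (phi2 F Y Z))
                (assoc MD (fob P X) (fob P Y) (fob P Z)))) /\
  (forall X : Ob C,
      comp (fmap P (lunitor MC X))
        (comp (phi2 F (tunit MC) X) (tensm MD (phi0 F) (idm (fob P X))))
      = lunitor MD (fob P X)) /\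
  (forall X : Ob C,
      comp (fmap P (runitor MC X))
        (comp (phi2 F X (tunit MC)) (tensm MD (idm (fob P X)) (phi0 F)))
      = runitor MD (fob P X)) /\
  (forall X Y : Ob C,
      comp (fmap P (braid MC X Y)) (phi2 F X Y)
      = comp (phi2 F Y X) (braid MD (fob P X) (fob P Y))) /\
  (forall X Y : Ob C,
      IsIso (cur MD (comp (fmap P (ev MC X Y)) (phi2 F (ihom MC X Y) X)))).

Definition RelHom (A B : Type) : Type := A -> B -> Prop.
Definition rel_id (A : Type) : RelHom A A := fun a a' => a = a'.
Definition rel_comp (A B C : Type) (N : RelHom B C) (M : RelHom A B) : RelHom A C :=
  fun a c => exists b, M a b /\ N b c.

Definition RelCat : Cat := {|
  Ob := Type; Hom := RelHom; idm := rel_id; comp := rel_comp |}.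

(* the standard compact closed (hence symmetric monoidal closed) structure
   (Rel, x, 1), with A -o B = A x B *)
Definition rel_tens (A B : Type) : Type := (A * B)%type.
Definition rel_tensm (A A' B B' : Type) (M : RelHom A B) (N : RelHom A' B')
  : RelHom (A * A') (B * B') :=
  fun p q => M (fst p) (fst q) /\ N (snd p) (snd q).
Definition rel_assoc (A B D : Type) : RelHom ((A * B) * D) (A * (B * D)) :=
  fun p q => fst (fst p) = fst q /\ snd (fst p) = fst (snd q) /\ snd p = snd (snd q).
Definition rel_lunitor (A : Type) : RelHom (unit * A) A := fun p a => snd p = a.
Definition rel_runitor (A : Type) : RelHom (A * unit) A := fun p a => fst p = a.
Definition rel_braid (A B : Type) : RelHom (A * B) (B * A) :=
  fun p q => fst p = snd q /\ snd p = fst q.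
Definition rel_ev (A B : Type) : RelHom ((A * B) * A) B :=
  fun p b => fst (fst p) = snd p /\ snd (fst p) = b.
Definition rel_cur (X A B : Type) (f : RelHom (X * A) B) : RelHom X (A * B) :=
  fun x q => f (x, fst q) (snd q).

Definition RelSMC : SMCData RelCat :=
  @Build_SMCData RelCat rel_tens rel_tensm unit rel_assoc rel_lunitor
    rel_runitor rel_braid rel_tens rel_ev rel_cur.

Definition SubObj : Type := { A : Type & A -> Prop }.

Definition SubHom (X Y : SubObj) : Type :=
  { M : projT1 X -> projT1 Y -> Prop |
      forall a b, M a b -> projT2 X a -> projT2 Y b }.

Definition sub_id (X : SubObj) : SubHom X X.
Proof. exists (fun a a' => a = a'). intros a b -> H; exact H. Defined.

Definition sub_comp (X Y Z : SubObj) (N : SubHom Y Z) (M : SubHom X Y) : SubHom X Z.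
Proof.
  exists (fun a c => exists b, proj1_sig M a b /\ proj1_sig N b c).
  intros a c [b [Hab Hbc]] Ha.
  exact (proj2_sig N b c Hbc (proj2_sig M a b Hab Ha)).
Defined.

Definition SubsetCat : Cat := @Build_Cat SubObj SubHom sub_id sub_comp.

Definition pFun : Functor SubsetCat RelCat :=
  @Build_Functor SubsetCat RelCat (fun X : SubObj => projT1 X)
    (fun X Y (M : SubHom X Y) => proj1_sig M).

Definition sub_tensor (X Y : SubObj) : SubObj :=
  existT (fun T : Type => T -> Prop) (projT1 X * projT1 Y)%type
    (fun p => projT2 X (fst p) /\ projT2 Y (snd p)).

Definition sub_impl (X Y : SubObj) : SubObj :=
  existT (fun T : Type => T -> Prop) (projT1 X * projT1 Y)%type
    (fun p => projT2 X (fst p) -> projT2 Y (snd p)).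

(* Subset lies strictly over Rel: its tensor, unit, structure maps, evaluation
   and currying are those of Rel, which happen to respect the predicates, and
   p is faithful because a morphism of Subset is a relation together with a
   proof of a proposition.  So every coherence and adjunction equation in
   Subset is the corresponding equation in Rel; only the inverses of the
   associator and unitors must be checked to respect the predicates (they are
   the converse relations).  With identity comparison maps, p then preserves
   the whole structure on the nose. *)

From Stdlib Require Import FunctionalExtensionality PropExtensionality ProofIrrelevance.

Lemma rel_ext (A B : Type) (M N : RelHom A B) :
  (forall a b, M a b <-> N a b) -> M = N.
Proof.
  intro H; apply functional_extensionality; intro a.
  apply functional_extensionality; intro b.
  apply propositional_extensionality, H.
Qed.

(* Witnesses of product type are built as tuples of evars, so that equations
   between pairs later instantiate them componentwise. *)
Ltac pair_pattern T :=
  let T' := eval hnf in T in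
  lazymatch T' with
  | prod ?X ?Y =>
      let a := pair_pattern X in let b := pair_pattern Y in constr:((a, b))
  | unit => constr:(tt)
  | _ => open_constr:(_ : T)
  end.

Ltac rel_step :=
  match goal with
  | p : ?T |- _ =>
      let T' := eval hnf in T in
      lazymatch T' with prod _ _ => destruct p | unit => destruct p end
  | H : exists _, _ |- _ => destruct H
  | H : _ /\ _ |- _ => destruct H
  | |- _ /\ _ => split
  | |- @ex ?T _ => let w := pair_pattern T in refine (ex_intro _ w _)
  | |- _ <-> _ => split
  | |- _ -> _ => intro
  | H : ?x = _ |- _ => is_var x; subst x
  | H : _ = ?x |- _ => is_var x; subst x
  | H : (_, _) = (_, _) |- _ => injection H; clear H
  | |- _ = _ => reflexivity
  | |- _ => eassumption
  | |- _ => progress simpl in *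
  end.

Ltac rel_solve :=
  apply rel_ext; intros; simpl in *;
  cbv [rel_comp rel_id rel_tensm rel_assoc rel_lunitor rel_runitor rel_braid
       rel_ev rel_cur] in *;
  repeat rel_step.

Definition rel_conv {A B : Type} (M : RelHom A B) : RelHom B A := fun b a => M a b.

Definition rel_inverse {A B : Type} (M : RelHom A B) (N : RelHom B A) : Prop :=
  rel_comp A B A N M = rel_id A /\ rel_comp B A B M N = rel_id B.

Lemma rel_comp_id_l (A B : Type) (M : RelHom A B) : rel_comp A B B (rel_id B) M = M.
Proof. rel_solve. Qed.

Lemma rel_comp_id_r (A B : Type) (M : RelHom A B) : rel_comp A A B M (rel_id A) = M.
Proof. rel_solve. Qed.

Lemma rel_tensm_id (A A' : Type) :
  rel_tensm A A' A A' (rel_id A) (rel_id A') = rel_id (A * A').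
Proof. rel_solve. Qed.

Lemma rel_assoc_inverse (A B D : Type) :
  rel_inverse (rel_assoc A B D) (rel_conv (rel_assoc A B D)).
Proof. unfold rel_conv; split; rel_solve. Qed.

Lemma rel_lunitor_inverse (A : Type) :
  rel_inverse (rel_lunitor A) (rel_conv (rel_lunitor A)).
Proof. unfold rel_conv; split; rel_solve. Qed.

Lemma rel_runitor_inverse (A : Type) :
  rel_inverse (rel_runitor A) (rel_conv (rel_runitor A)).
Proof. unfold rel_conv; split; rel_solve. Qed.

Lemma rel_iso {A B : Type} {M : RelHom A B} {N : RelHom B A} :
  rel_inverse M N -> @IsIso RelCat A B M.
Proof. now exists N. Qed.

Lemma RelCat_IsCat : IsCat RelCat.
Proof.
  split; [exact rel_comp_id_l | split; [exact rel_comp_id_r |]].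
  intros; simpl; rel_solve.
Qed.

Lemma RelSMC_IsSMC : IsSMC RelSMC.
Proof.
  repeat split; intros; simpl.
  all: try (rel_solve; fail).
  - exact (rel_iso (rel_assoc_inverse A B D)).
  - exact (rel_iso (rel_lunitor_inverse A)).
  - exact (rel_iso (rel_runitor_inverse A)).
Qed.

Lemma pFun_faithful (X Y : SubObj) (M N : SubHom X Y) :
  fmap pFun M = fmap pFun N -> M = N.
Proof.
  destruct M as [m pm], N as [n pn]; simpl; intros ->.
  f_equal; apply proof_irrelevance.
Qed.

Lemma SubsetCat_IsCat : IsCat SubsetCat.
Proof.
  destruct RelCat_IsCat as [Hid_l [Hid_r Hassoc]].
  split; [| split]; intros; apply pFun_faithful.
  - exact (Hid_l _ _ _).
  - exact (Hid_r _ _ _).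
  - exact (Hassoc _ _ _ _ _ _ _).
Qed.

Lemma pFun_IsFunctor : IsFunctor pFun.
Proof. split; reflexivity. Qed.

Definition sub_unit : SubObj := existT (fun T : Type => T -> Prop) unit (fun _ => True).

Definition sub_tensm (A A' B B' : SubObj) (f : SubHom A B) (g : SubHom A' B')
  : SubHom (sub_tensor A A') (sub_tensor B B').
Proof.
  exists (rel_tensm _ _ _ _ (proj1_sig f) (proj1_sig g)).
  intros [a a'] [b b'] [Hf Hg] [Ha Ha'].
  exact (conj (proj2_sig f _ _ Hf Ha) (proj2_sig g _ _ Hg Ha')).
Defined.

Definition sub_assoc (A B D : SubObj)
  : SubHom (sub_tensor (sub_tensor A B) D) (sub_tensor A (sub_tensor B D)).
Proof.
  exists (rel_assoc _ _ _).
  intros [[a b] d] [a' [b' d']] H; hnf in H; simpl in H.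
  destruct H as (<- & <- & <-); simpl; tauto.
Defined.

Definition sub_assoc_inv (A B D : SubObj)
  : SubHom (sub_tensor A (sub_tensor B D)) (sub_tensor (sub_tensor A B) D).
Proof.
  exists (rel_conv (rel_assoc _ _ _)).
  intros [a' [b' d']] [[a b] d] H; hnf in H; simpl in H.
  destruct H as (-> & -> & ->); simpl; tauto.
Defined.

Definition sub_lunitor (A : SubObj) : SubHom (sub_tensor sub_unit A) A.
Proof.
  exists (rel_lunitor _).
  intros [u a] b H; hnf in H; simpl in H; subst; simpl; tauto.
Defined.

Definition sub_lunitor_inv (A : SubObj) : SubHom A (sub_tensor sub_unit A).
Proof.
  exists (rel_conv (rel_lunitor _)).
  intros b [u a] H; hnf in H; simpl in H; subst; simpl; tauto.
Defined.

Definition sub_runitor (A : SubObj) : SubHom (sub_tensor A sub_unit) A.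
Proof.
  exists (rel_runitor _).
  intros [a u] b H; hnf in H; simpl in H; subst; simpl; tauto.
Defined.

Definition sub_runitor_inv (A : SubObj) : SubHom A (sub_tensor A sub_unit).
Proof.
  exists (rel_conv (rel_runitor _)).
  intros b [a u] H; hnf in H; simpl in H; subst; simpl; tauto.
Defined.

Definition sub_braid (A B : SubObj) : SubHom (sub_tensor A B) (sub_tensor B A).
Proof.
  exists (rel_braid _ _).
  intros [a b] [b' a'] H; hnf in H; simpl in H.
  destruct H as [<- <-]; simpl; tauto.
Defined.

Definition sub_ev (A B : SubObj) : SubHom (sub_tensor (sub_impl A B) A) B.
Proof.
  exists (rel_ev _ _).
  intros [[a b] a'] b' H; hnf in H; simpl in H.
  destruct H as [<- <-]; simpl; tauto.
Defined.

Definition sub_cur (X A B : SubObj) (f : SubHom (sub_tensor X A) B)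
  : SubHom X (sub_impl A B).
Proof.
  exists (rel_cur _ _ _ (proj1_sig f)).
  intros x [a b] Hf Hx Ha; exact (proj2_sig f _ _ Hf (conj Hx Ha)).
Defined.

Definition SubsetSMC : SMCData SubsetCat :=
  @Build_SMCData SubsetCat sub_tensor sub_tensm sub_unit sub_assoc sub_lunitor
    sub_runitor sub_braid sub_impl sub_ev sub_cur.

Lemma sub_iso {X Y : SubObj} {M : SubHom X Y} (N : SubHom Y X) :
  rel_inverse (proj1_sig M) (proj1_sig N) -> @IsIso SubsetCat X Y M.
Proof. intros [HNM HMN]; exists N; split; apply pFun_faithful; assumption. Qed.

Lemma SubsetSMC_IsSMC : IsSMC SubsetSMC.
Proof.
  destruct RelSMC_IsSMC as (Htensm_id & Htensm_comp & _ & _ & _ & Hnat_assoc & Hnat_l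
    & Hnat_r & Hnat_braid & Hpentagon & Htriangle & Hhexagon & Hsym & Hev & Hcur).
  repeat split; intros.
  - apply pFun_faithful; exact (Htensm_id _ _).
  - apply pFun_faithful; exact (Htensm_comp _ _ _ _ _ _ _ _ _ _).
  - apply (sub_iso (sub_assoc_inv A B D)), rel_assoc_inverse.
  - apply (sub_iso (sub_lunitor_inv A)), rel_lunitor_inverse.
  - apply (sub_iso (sub_runitor_inv A)), rel_runitor_inverse.
  - apply pFun_faithful; exact (Hnat_assoc _ _ _ _ _ _ _ _ _).
  - apply pFun_faithful; exact (Hnat_l _ _ _).
  - apply pFun_faithful; exact (Hnat_r _ _ _).
  - apply pFun_faithful; exact (Hnat_braid _ _ _ _ _ _).
  - apply pFun_faithful; exact (Hpentagon _ _ _ _).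
  - apply pFun_faithful; exact (Htriangle _ _).
  - apply pFun_faithful; exact (Hhexagon _ _ _).
  - apply pFun_faithful; exact (Hsym _ _).
  - apply pFun_faithful; exact (Hev _ _ _ _).
  - apply pFun_faithful; apply Hcur; exact (f_equal (fmap pFun) H).
Qed.

Definition pFun_smc : SMFData SubsetSMC RelSMC pFun :=
  @Build_SMFData _ _ SubsetSMC RelSMC pFun (fun X Y => rel_id _) (rel_id unit).

Lemma rel_id_inverse (A : Type) : rel_inverse (rel_id A) (rel_id A).
Proof. split; apply rel_comp_id_l. Qed.

Lemma rel_cur_ev (A B : Type) : rel_cur (A * B) A B (rel_ev A B) = rel_id (A * B).
Proof.
  destruct RelSMC_IsSMC as (_ & _ & _ & _ & _ & _ & _ & _ & _ & _ & _ & _ & _ & _ & Hcur).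
  symmetry; apply (Hcur (A * B)%type A B); simpl.
  rewrite rel_tensm_id; apply rel_comp_id_r.
Qed.

Lemma pFun_smc_IsStrongSMClosed : IsStrongSMClosed pFun_smc.
Proof.
  repeat split; intros; simpl.
  - exact (rel_iso (rel_id_inverse _)).
  - exact (rel_iso (rel_id_inverse _)).
  - now rewrite rel_comp_id_l, rel_comp_id_r.
  - now rewrite !rel_tensm_id, !rel_comp_id_l, !rel_comp_id_r.
  - now rewrite rel_tensm_id, !rel_comp_id_r.
  - now rewrite rel_tensm_id, !rel_comp_id_r.
  - now rewrite rel_comp_id_l, rel_comp_id_r.
  - rewrite rel_comp_id_r, rel_cur_ev; exact (rel_iso (rel_id_inverse _)).
Qed.

Theorem mainTheorem2 :
  IsCat RelCat /\ IsSMC RelSMC /\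
  IsCat SubsetCat /\ IsFunctor pFun /\
  exists MS : SMCData SubsetCat,
    IsSMC MS /\
    (forall X Y : SubObj, tens MS X Y = sub_tensor X Y) /\
    (forall X Y : SubObj, ihom MS X Y = sub_impl X Y) /\
    exists F : SMFData MS RelSMC pFun, IsStrongSMClosed F.
Proof.
  split; [exact RelCat_IsCat |].
  split; [exact RelSMC_IsSMC |].
  split; [exact SubsetCat_IsCat |].
  split; [exact pFun_IsFunctor |].
  exists SubsetSMC.
  split; [exact SubsetSMC_IsSMC |].
  split; [reflexivity |].
  split; [reflexivity |].
  exists pFun_smc; exact pFun_smc_IsStrongSMClosed.
Qed.
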